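(* For $1\le i\le s$ let ${\mathcal B}_i$ be a finite $w_{\mathfrak P_i}$-reduced family of nonzero elements of $L$, and let $z_i\in L^*$ be such that for every $b\in{\mathcal B}_i$: (1) $\lfloor w_{\mathfrak P_i}(z_ib)\rfloor\le\lfloor w_{\mathfrak P_j}(z_ib)\rfloor$ for all $j$ with $i<j\le s$; (2) $\lfloor w_{\mathfrak P_i}(z_ib)\rfloor<\lfloor w_{\mathfrak P_l}(z_ib)\rfloor$ for all $l$ with $1\le l<i$. Then the family $\bigcup_{i=1}^s z_i{\mathcal B}_i$ is $w_S$-semi-reduced.
   Context: Let $A$ be a Dedekind domain with fraction field $K$, $\mathfrak p$ a nonzero prime ideal with valuation $v_\mathfrak p$. Let $f\in A[x]$ be monic irreducible separable, $\theta$ a root, $L=K(\theta)$, $\mathcal O$ the integral closure of $A$ in $L$, and $S=\{\mathfrak P_1,\dots,\mathfrak P_s\}$ the set of all primes of $\mathcal O$ over $\mathfrak p$ (in a fixed order), with ramification indices $e_i$ and normalized valuations $v_{\mathfrak P_i}$; $w_{\mathfrak P_i}=v_{\mathfrak P_i}/e_i$, $w_S(z)=\min_iw_{\mathfrak P_i}(z)$. A finite family ${\mathcal B}\subset L$ is $w$-reduced if $w(\sum_b\lambda_bb)=\min_bw(\lambda_bb)$ for all $\lambda_b\in K$, and $w$-semi-reduced if $\lfloor w(\sum_b\lambda_bb)\rfloor=\min_b\lfloor w(\lambda_bb)\rfloor$ for all $\lambda_b\in K$. *)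

From HB Require Import structures.
From mathcomp Require Import all_boot all_order all_algebra all_field.
Set Implicit Arguments. Unset Strict Implicit. Unset Printing Implicit Defensive.
Import Order.TTheory GRing.Theory Num.Theory.
Local Open Scope ring_scope.

(* A normalized discrete valuation on a field F, given by its values on
   nonzero elements (the value at 0 is irrelevant; 0 is treated as having
   valuation +infinity everywhere below). *)
Definition is_ndval (F : fieldType) (v : F -> int) : Prop :=
  [/\ forall x y, x != 0 -> y != 0 -> v (x * y) = v x + v y,
      forall x y, x != 0 -> y != 0 -> x + y != 0 ->
        Num.min (v x) (v y) <= v (x + y)
    & forall n : int, exists2 x, x != 0 & v x = n].

(* Values in T u {+oo}, with None standing for +oo. *)
Definition emin {d} {T : orderType d} (a b : option T) : option T :=
  match a, b with
  | None, _ => b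
  | _, None => a
  | Some x, Some y => Some (Order.min x y)
  end.

Definition wval (L : fieldType) (v : L -> int) (e : nat) (x : L) : rat :=
  (v x)%:~R / (e%:R).

Definition ewval (L : fieldType) (v : L -> int) (e : nat) (x : L) : option rat :=
  if x == 0 then None else Some (wval v e x).

Definition ewS (L : fieldType) (s : nat) (v : 'I_s -> L -> int) (e : 'I_s -> nat)
  (x : L) : option rat :=
  \big[emin/None]_(i < s) ewval (v i) (e i) x.

Definition efloor (a : option rat) : option int := omap Num.floor a.

Definition reduced (K : fieldType) (L : lmodType K) (T : finType)
  (W : L -> option rat) (B : T -> L) : Prop :=
  forall lam : T -> K,
    W (\sum_(t : T) lam t *: B t) = \big[emin/None]_(t : T) W (lam t *: B t).

Definition semi_reduced (K : fieldType) (L : lmodType K) (T : finType)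
  (W : L -> option rat) (B : T -> L) : Prop :=
  forall lam : T -> K,
    efloor (W (\sum_(t : T) lam t *: B t))
    = \big[emin/None]_(t : T) efloor (W (lam t *: B t)).

From HB Require Import structures.
From mathcomp Require Import all_boot all_order all_algebra all_field.
From mathcomp Require Import zify.
Import Order.TTheory GRing.Theory Num.Theory.
Local Open Scope ring_scope.
Set Implicit Arguments. Unset Strict Implicit.

(* Floors commute with minima, so floor (w_S y) = min_j floor (w_Pj y), and by
   (1)-(2) each generator z_i b attains min_j floor (w_Pj (z_i b)) at j = i;
   scaling by a in K* shifts all these floors by v_p(a).
   Writing y = sum_i y_i with y_i in the span of z_i B_i, let m be the minimum
   of the floors of the terms and i0 the least index at which m is attained.
   Since B_i0 is w_Pi0-reduced, floor (w_Pi0 y_i0) = m, while every term of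
   the other blocks has floor of w_Pi0 at least m + 1: by (1) for blocks before
   i0 (where m is not attained), by (2) for blocks after i0.  The strict
   triangle inequality then gives floor (w_Pi0 y) = m. *)

Section OptionOrder.
Context {d : Order.disp_t} {T : orderType d}.

Definition leo (a b : option T) : bool :=
  match b, a with
  | None, _ => true
  | Some _, None => false
  | Some y, Some x => (x <= y)%O
  end.

Lemma leo_trans a b c : leo a b -> leo b c -> leo a c.
Proof. by case: c => // z; case: b => // y; case: a => // x; exact: le_trans. Qed.

Lemma leo_anti a b : leo a b -> leo b a -> a = b.
Proof. by case: a => [x|]; case: b => [y|] //= h1 h2; rewrite (@le_anti _ _ x y) ?h1. Qed.

Lemma leo_eminl a b : leo (emin a b) a.
Proof. by case: a => [x|]; case: b => [y|] //=; rewrite ?ge_min ?lexx. Qed.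

Lemma leo_eminr a b : leo (emin a b) b.
Proof. by case: a => [x|]; case: b => [y|] //=; rewrite ?ge_min ?lexx ?orbT. Qed.

Lemma leo_emin c a b : leo c a -> leo c b -> leo c (emin a b).
Proof.
by case: a => [x|]; case: b => [y|] //=; case: c => // w /= h1 h2; rewrite le_min h1.
Qed.

Lemma emin_cases (a b : option T) : emin a b = a \/ emin a b = b.
Proof.
case: a => [x|]; case: b => [y|] /=; try by [left|right].
by rewrite minEle; case: ifP; [left|right].
Qed.

Lemma big_emin_lb (I : finType) (F : I -> option T) t :
  leo (\big[emin/None]_i F i) (F t).
Proof.
elim: (index_enum I) (mem_index_enum t) => // a r IH.
rewrite inE big_cons => /orP[/eqP->|/IH]; first exact: leo_eminl.
exact: leo_trans (leo_eminr _ _).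
Qed.

Lemma big_emin_glb (I : finType) (P : pred I) (F : I -> option T) c :
  (forall t, P t -> leo c (F t)) -> leo c (\big[emin/None]_(i | P i) F i).
Proof. by move=> h; apply: (big_ind (leo c)) => //; exact: leo_emin. Qed.

Lemma big_emin_attained (I : finType) (F : I -> option T) :
  \big[emin/None]_i F i = None \/ exists t, F t = \big[emin/None]_i F i.
Proof.
apply: (big_ind (fun o => o = None \/ exists t, F t = o)); first by left.
  by move=> x y hx hy; case: (emin_cases x y) => ->.
by move=> i _; right; exists i.
Qed.

Lemma big_emin_eq (I : finType) (F : I -> option T) c :
  (forall t, leo c (F t)) -> (c = None \/ exists t, F t = c) ->
  \big[emin/None]_i F i = c.
Proof.
move=> hl ha; apply: leo_anti; last exact: big_emin_glb.
by case: ha => [->|[t <-]] //; exact: big_emin_lb.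
Qed.

End OptionOrder.

Lemma omap_emin {d1 d2 : Order.disp_t} {T1 : orderType d1} {T2 : orderType d2}
  (f : T1 -> T2) : {homo f : x y / (x <= y)%O} ->
  {morph omap f : a b / emin a b}.
Proof.
move=> hf [x|] [y|] //=; congr Some; rewrite !minEle.
case: (leP x y) => [/hf -> //|/ltW/hf hyx].
by case: leP => // hfxy; apply/eqP; rewrite eq_le hyx.
Qed.

Lemma efloor_big_emin (I : finType) (F : I -> option rat) :
  efloor (\big[emin/None]_i F i) = \big[emin/None]_i efloor (F i).
Proof. exact: (big_morph _ (omap_emin (@le_floor rat))). Qed.

Lemma reduced_semi_reduced (K : fieldType) (L : lmodType K) (T : finType)
  (W : L -> option rat) (B : T -> L) : reduced W B -> semi_reduced W B.
Proof. by move=> hB lam; rewrite hB efloor_big_emin. Qed.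

Section NormalizedValuation.
Variables (F : fieldType) (v : F -> int).
Hypothesis v_val : is_ndval v.

Lemma ndval1 : v 1 = 0.
Proof.
by case: v_val => vM _ _; have := vM 1 1 (oner_neq0 _) (oner_neq0 _); rewrite mulr1; lia.
Qed.

Lemma ndvalN x : x != 0 -> v (- x) = v x.
Proof.
case: v_val => vM _ _ hx; have hN1 : (-1 : F) != 0 by rewrite oppr_eq0 oner_neq0.
have vN1 : v (-1) = 0 by have := vM _ _ hN1 hN1; rewrite mulrNN mulr1 ndval1; lia.
by rewrite -mulN1r vM // vN1 add0r.
Qed.

Lemma ndvalD_lt x y : x != 0 -> y != 0 -> v x < v y ->
  x + y != 0 /\ v (x + y) = v x.
Proof.
move=> hx hy vxy; case: (v_val) => _ vD _.
have hxy : x + y != 0.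
  apply: contraTneq vxy => /(canRL (addKr x)); rewrite addr0 => ->.
  by rewrite ndvalN // ltxx.
have hNy : - y != 0 by rewrite oppr_eq0.
split=> //; have := vD _ _ hx hy hxy.
have := vD _ _ hxy hNy; rewrite addrK ndvalN // => /(_ hx).
lia.
Qed.

Variables (e : nat) (e_pos : (0 < e)%N).

Lemma ewval_neq0 x : x != 0 -> ewval v e x = Some (wval v e x).
Proof. by rewrite /ewval => /negbTE ->. Qed.

Lemma ewval0 : ewval v e 0 = None.
Proof. by rewrite /ewval eqxx. Qed.

Lemma ler_wval x y : (wval v e x <= wval v e y) = (v x <= v y).
Proof. by rewrite /wval ler_pM2r ?invr_gt0 ?ltr0n // ler_int. Qed.

Lemma ltr_wval x y : (wval v e x < wval v e y) = (v x < v y).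
Proof. by rewrite /wval ltr_pM2r ?invr_gt0 ?ltr0n // ltr_int. Qed.

Lemma ewvalMl z y : z != 0 ->
  ewval v e (z * y) = omap (fun q => wval v e z + q) (ewval v e y).
Proof.
move=> hz; have [->|hy] := eqVneq y 0; first by rewrite mulr0 ewval0.
rewrite !ewval_neq0 ?mulf_neq0 //=; case: v_val => vM _ _.
by rewrite /wval vM // intrD mulrDl.
Qed.

Lemma efloor_ewvalD (a : option int) y1 y2 :
  leo a (efloor (ewval v e y1)) -> leo a (efloor (ewval v e y2)) ->
  leo a (efloor (ewval v e (y1 + y2))).
Proof.
have [->|h1] := eqVneq y1 0; first by rewrite add0r.
have [->|h2] := eqVneq y2 0; first by rewrite addr0.
have [->|h12] := eqVneq (y1 + y2) 0; first by rewrite ewval0.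
case: v_val => _ vD _; have := vD _ _ h1 h2 h12; rewrite !ewval_neq0 //=.
case: a => // m /= hmin hm1 hm2; rewrite ge_min in hmin.
by case/orP: hmin => h; [apply: le_trans hm1 _ | apply: le_trans hm2 _];
  apply: le_floor; rewrite ler_wval.
Qed.

Lemma efloor_ewval_sum (a : option int) (I : finType) (P : pred I) (f : I -> F) :
  (forall i, P i -> leo a (efloor (ewval v e (f i)))) ->
  leo a (efloor (ewval v e (\sum_(i | P i) f i))).
Proof.
move=> h; apply: (big_ind (fun y => leo a (efloor (ewval v e y)))) => //.
  by rewrite ewval0.
exact: efloor_ewvalD.
Qed.

Lemma efloor_ewvalD_dom y r m : efloor (ewval v e y) = Some m ->
  leo (Some (m + 1)) (efloor (ewval v e r)) ->
  efloor (ewval v e (y + r)) = Some m.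
Proof.
have [->|hy] := eqVneq y 0; first by rewrite ewval0.
have [->|hr] := eqVneq r 0; first by rewrite addr0.
rewrite (ewval_neq0 hy) (ewval_neq0 hr) /= => -[<-] hle.
have [hyr vyr] : y + r != 0 /\ v (y + r) = v y.
  apply: ndvalD_lt => //; rewrite -ltr_wval.
  by rewrite (lt_le_trans (floorD1_gt _)) // (le_trans _ (floor_le _)) ?ler_int.
by rewrite ewval_neq0 //= /wval vyr.
Qed.

End NormalizedValuation.

Section Extension.
Variables (K : fieldType) (L : fieldExtType K) (vp : K -> int).
Variables (v : L -> int) (e : nat).
Hypotheses (v_val : is_ndval v) (e_pos : (0 < e)%N)
  (v_ext : forall a : K, a != 0 -> v (a%:A) = e%:Z * vp a).

Lemma floor_wvalZ (a : K) (y : L) : a != 0 -> y != 0 ->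
  Num.floor (wval v e (a *: y)) = vp a + Num.floor (wval v e y).
Proof.
move=> ha hy; have hA : (a%:A : L) != 0 by rewrite scaler_eq0 oner_eq0 orbF.
case: v_val => vM _ _; rewrite -mulr_algl /wval vM // v_ext // intrD mulrDl.
have -> : ((e%:Z * vp a)%:~R / e%:R : rat) = (vp a)%:~R.
  by rewrite intrM mulrAC -[X in X / _]pmulrn mulfV ?mul1r // pnatr_eq0 -lt0n.
by rewrite floorDzr ?intr_int // intrKfloor.
Qed.

Lemma reduced_mull (T : finType) (B : T -> L) (z : L) : z != 0 ->
  reduced (K := K) (ewval v e) B ->
  reduced (K := K) (ewval v e) (fun t => z * B t).
Proof.
move=> hz hB lam.
have -> : \sum_t lam t *: (z * B t) = z * \sum_t lam t *: B t.
  by rewrite mulr_sumr; apply: eq_bigr => t _; rewrite scalerAr.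
rewrite ewvalMl // hB.
have shift_homo : {homo (fun q : rat => wval v e z + q) : x y / (x <= y)%O}.
  by move=> x y; rewrite lerD2l.
rewrite (big_morph _ (omap_emin shift_homo) erefl).
by apply: eq_bigr => t _; rewrite -ewvalMl // -scalerAr.
Qed.

End Extension.

Lemma efloor_ewS (L : fieldType) (s : nat) (vP : 'I_s -> L -> int)
    (e : 'I_s -> nat) y :
  efloor (ewS vP e y) = \big[emin/None]_j efloor (ewval (vP j) (e j) y).
Proof. exact: efloor_big_emin. Qed.

Unset Implicit Arguments.

Section SemiReducedUnion.
Context {K : fieldType} {L : fieldExtType K} {vp : K -> int}.
Context {s : nat} {vP : 'I_s -> L -> int} {e : 'I_s -> nat}.
Hypotheses (vP_val : forall i, is_ndval (vP i)) (e_pos : forall i, (0 < e i)%N)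
  (vP_ext : forall i (a : K), a != 0 -> vP i (a%:A) = (e i)%:Z * vp a).
Context {I : 'I_s -> finType} {B : forall i, I i -> L} {z : 'I_s -> L}.
Hypotheses (B_nz : forall i (t : I i), B i t != 0) (z_nz : forall i, z i != 0)
  (B_red : forall i, reduced (K := K) (ewval (vP i) (e i)) (B i)).
Hypotheses
  (cond1 : forall i (t : I i) (j : 'I_s), (i < j)%N ->
     Num.floor (wval (vP i) (e i) (z i * B i t))
       <= Num.floor (wval (vP j) (e j) (z i * B i t)))
  (cond2 : forall i (t : I i) (l : 'I_s), (l < i)%N ->
     Num.floor (wval (vP i) (e i) (z i * B i t))
       < Num.floor (wval (vP l) (e l) (z i * B i t))).

Local Notation fl j y := (Num.floor (wval (vP j) (e j) y)).
Local Notation W j y := (efloor (ewval (vP j) (e j) y)).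

Lemma scale_zB_neq0 i (t : I i) (a : K) : a != 0 -> a *: (z i * B i t) != 0.
Proof. by move=> ha; rewrite scaler_eq0 negb_or ha mulf_neq0. Qed.

Lemma floor_wval_zB_le i (t : I i) (a : K) (j : 'I_s) : a != 0 ->
  fl i (a *: (z i * B i t)) <= fl j (a *: (z i * B i t)).
Proof.
move=> ha; have hzB : z i * B i t != 0 by rewrite mulf_neq0.
rewrite !(floor_wvalZ (vP_val _) (e_pos _) (vP_ext _)) // lerD2l.
case: (ltngtP i j) => [/cond1 //|/(cond2 _ t)/ltW //|/val_inj <- //].
Qed.

Lemma floor_wval_zB_lt i (t : I i) (a : K) (l : 'I_s) : a != 0 -> (l < i)%N ->
  fl i (a *: (z i * B i t)) < fl l (a *: (z i * B i t)).
Proof.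
move=> ha li; have hzB : z i * B i t != 0 by rewrite mulf_neq0.
by rewrite !(floor_wvalZ (vP_val _) (e_pos _) (vP_ext _)) // ltrD2l cond2.
Qed.

Lemma efloor_wval_zB_le i (t : I i) (a : K) (j : 'I_s) :
  leo (W i (a *: (z i * B i t))) (W j (a *: (z i * B i t))).
Proof.
have [->|ha] := eqVneq a 0; first by rewrite scale0r !ewval0.
by rewrite !ewval_neq0 ?scale_zB_neq0 //=; exact: floor_wval_zB_le.
Qed.

Lemma efloor_ewS_zB i (t : I i) (a : K) :
  efloor (ewS vP e (a *: (z i * B i t))) = W i (a *: (z i * B i t)).
Proof.
rewrite efloor_ewS; apply: big_emin_eq; first exact: efloor_wval_zB_le.
by right; exists i.
Qed.

Lemma efloor_wval_zB_gt i0 i (t : I i) (a : K) m : i != i0 ->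
  leo (Some m) (W i (a *: (z i * B i t))) ->
  ((i < i0)%N -> W i (a *: (z i * B i t)) != Some m) ->
  leo (Some (m + 1)) (W i0 (a *: (z i * B i t))).
Proof.
have [->|ha] := eqVneq a 0; first by rewrite scale0r !ewval0.
rewrite !ewval_neq0 ?scale_zB_neq0 //= => ii0 hm.
case: (ltngtP i i0) => [_|i0i|/val_inj/eqP]; last by rewrite (negbTE ii0).
  move=> /(_ isT); have := floor_wval_zB_le _ t _ i0 ha.
  by move: hm; rewrite (inj_eq Some_inj); lia.
by have := floor_wval_zB_lt _ t _ _ ha i0i; move: hm => /=; lia.
Qed.

Local Notation zB p := (z (tag p) * B (tag p) (tagged p)).
Local Notation T lam p := (W (tag p) (lam p *: zB p)).

Lemma efloor_wval_sum_min (lam : {i : 'I_s & I i} -> K) m i0 (t0 : I i0) :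
  T lam (Tagged I t0) = Some m -> (forall p, leo (Some m) (T lam p)) ->
  (forall p, T lam p = Some m -> (i0 <= tag p)%N) ->
  W i0 (\sum_p lam p *: zB p) = Some m.
Proof.
move=> hm lb hmin.
have -> : \sum_p lam p *: zB p =
    \sum_i \sum_(t : I i) lam (Tagged I t) *: (z i * B i t).
  by rewrite sig_big_dep; apply: eq_bigr => -[i t].
rewrite (bigD1 i0) //=; apply: (efloor_ewvalD_dom (vP_val i0) (e_pos i0)).
  rewrite (reduced_semi_reduced (reduced_mull (vP_val i0) (z_nz i0) (B_red i0))).
  by apply: big_emin_eq => [t|]; [exact: (lb (Tagged I t)) | right; exists t0].
apply: (efloor_ewval_sum (vP_val i0) (e_pos i0)) => i ii0.
apply: (efloor_ewval_sum (vP_val i0) (e_pos i0)) => t _.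
apply: efloor_wval_zB_gt ii0 (lb (Tagged I t)) _ => i_i0.
by apply/eqP => /hmin /=; rewrite leqNgt i_i0.
Qed.

End SemiReducedUnion.

Theorem mainTheorem9
  (K : fieldType) (L : fieldExtType K)
  (Lsep : separable (1%VS : {vspace L}) fullv)
  (vp : K -> int) (vp_val : is_ndval vp)
  (s : nat) (vP : 'I_s -> L -> int) (e : 'I_s -> nat)
  (vP_val : forall i, is_ndval (vP i))
  (e_pos : forall i, (0 < e i)%N)
  (vP_ext : forall i (a : K), a != 0 -> vP i (a%:A) = (e i)%:Z * vp a)
  (vP_inj : forall i j, (forall x : L, x != 0 -> vP i x = vP j x) -> i = j)
  (vP_all : forall u : L -> int, is_ndval u ->
      forall e' : nat, (0 < e')%N ->
      (forall a : K, a != 0 -> u (a%:A) = e'%:Z * vp a) ->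
      exists i, forall x : L, x != 0 -> u x = vP i x)
  (I : 'I_s -> finType) (B : forall i, I i -> L)
  (B_nz : forall i (t : I i), B i t != 0)
  (B_red : forall i, reduced (K := K) (ewval (vP i) (e i)) (B i))
  (z : 'I_s -> L) (z_nz : forall i, z i != 0)
  (cond1 : forall i (t : I i) (j : 'I_s), (i < j)%N ->
     Num.floor (wval (vP i) (e i) (z i * B i t))
       <= Num.floor (wval (vP j) (e j) (z i * B i t)))
  (cond2 : forall i (t : I i) (l : 'I_s), (l < i)%N ->
     Num.floor (wval (vP i) (e i) (z i * B i t))
       < Num.floor (wval (vP l) (e l) (z i * B i t))) :
  semi_reduced (K := K) (ewS vP e)
    (fun p : {i : 'I_s & I i} => z (tag p) * B (tag p) (tagged p)).
Proof.
move=> lam; rewrite efloor_ewS.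
pose T p := efloor (ewval (vP (tag p)) (e (tag p))
  (lam p *: (z (tag p) * B (tag p) (tagged p)))).
rewrite (eq_bigr T) => [|p _]; last first.
  by rewrite /= (efloor_ewS_zB vP_val e_pos vP_ext B_nz z_nz cond1 cond2).
apply: big_emin_eq => [j|].
  apply: (efloor_ewval_sum (vP_val j) (e_pos j)) => p _.
  apply: leo_trans (big_emin_lb T p) _.
  exact: (efloor_wval_zB_le vP_val e_pos vP_ext B_nz z_nz cond1 cond2).
have [->|[p0]] := big_emin_attained T; first by left.
case Em: (\big[emin/None]_p T p) => [m|] Tp0; last by left.
have lb p : leo (Some m) (T p) by rewrite -Em; exact: big_emin_lb.
case: (@arg_minnP _ p0 (fun p => T p == Some m) (fun p => val (tag p))).
  by rewrite Tp0.
move=> [i0 t0] /eqP Tt0 hmin; right; exists i0.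
apply: (efloor_wval_sum_min vP_val e_pos vP_ext B_nz z_nz B_red cond1 cond2 _ _ _ t0).
- exact: Tt0.
- exact: lb.
- by move=> p /eqP; exact: hmin.
Qed.
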